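(* For all $n\ge0$, $$F_n(x,y,q)=\sum_{k\ge0}x^{n-2k}y^kq^{\binom k2+\binom{n-k}2}\begin{bmatrix}n-k\\k\end{bmatrix}_q.$$ More precisely, for each $k$, the sum of $q^{rb(\pi)}$ over those $\pi\in\Pi_n(13/2,123)$ with exactly $k$ two-element blocks equals $q^{\binom k2+\binom{n-k}2}\begin{bmatrix}n-k\\k\end{bmatrix}_q$.
   Context: $\Pi_n(13/2,123)$ is the set of layered matchings of $[n]$: set partitions whose blocks are consecutive intervals $[1,i_1]/\dots/[i_{k-1}+1,n]$, each of size $1$ or $2$. $\Pi_0(13/2,123)$ consists of the empty partition. For $\pi=B_1/\dots/B_k$ with $\min B_1<\dots<\min B_k$, $rb(\pi)$ is the number of pairs $(b,B_j)$ with $b\in B_i$, $j>i$, $\max B_j>b$. Let $s(\pi)$ and $d(\pi)$ be the numbers of blocks of size $1$ and $2$. Define $F_n(x,y,q)=\sum_{\pi\in\Pi_n(13/2,123)}x^{s(\pi)}y^{d(\pi)}q^{rb(\pi)}$. The $q$-binomial coefficient is $\begin{bmatrix}n\\k\end{bmatrix}_q=\prod_{i=1}^k\frac{q^{n-i+1}-1}{q^i-1}$ for $0\le k\le n$, and it is $0$ if $k>n$. *)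

From HB Require Import structures.
From mathcomp Require Import all_boot all_order all_algebra.
Set Implicit Arguments. Unset Strict Implicit. Unset Printing Implicit Defensive.
Import Order.TTheory GRing.Theory Num.Theory.

Fixpoint comps12 (n : nat) : seq (seq nat) :=
  match n with
  | 0 => [:: [::]]
  | 1 => [:: [:: 1]]
  | (m.+1 as n').+1 => [seq 1 :: c | c <- comps12 n'] ++ [seq 2 :: c | c <- comps12 m]
  end.

Fixpoint blocks_of (a : nat) (c : seq nat) : seq (seq nat) :=
  match c with
  | [::] => [::]
  | p :: c' => iota a p :: blocks_of (a + p) c'
  end.

(* Pi_n(13/2,123): layered matchings of [n] = {1,...,n}, each given as the
   list of its blocks B_1, ..., B_k (ordered by increasing minima), each block
   listed as the increasing sequence of its elements. *)
Definition layered_matchings (n : nat) : seq (seq (seq nat)) :=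
  [seq blocks_of 1 c | c <- comps12 n].

Definition rb (bs : seq (seq nat)) : nat :=
  \sum_(i < size bs) \sum_(b <- nth [::] bs i)
     \sum_(i.+1 <= j < size bs) (b < \max_(c <- nth [::] bs j) c).

Definition nsingle (bs : seq (seq nat)) : nat := count (fun B => size B == 1) bs.
Definition ndouble (bs : seq (seq nat)) : nat := count (fun B => size B == 2) bs.

Local Open Scope ring_scope.

Definition Rq := {fraction {poly int}}.
Definition qv : Rq := tofrac ('X : {poly int}).

Definition qbinom (n k : nat) : Rq :=
  if (k <= n)%N then
    \prod_(1 <= i < k.+1) ((qv ^+ (n - i + 1) - 1) / (qv ^+ i - 1))
  else 0.

(* F_n(x,y,q) in Rq[y][x]: x is the outer variable 'X, y is ('X)%:P. *)
Definition xv : {poly {poly Rq}} := 'X.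
Definition yv : {poly {poly Rq}} := ('X)%:P.
Definition qc (r : Rq) : {poly {poly Rq}} := (r%:P)%:P.

Definition Fn (n : nat) : {poly {poly Rq}} :=
  \sum_(pi <- layered_matchings n)
     xv ^+ nsingle pi * yv ^+ ndouble pi * qc (qv ^+ rb pi).

From Pilot Require Import Defs.
From HB Require Import structures.
From mathcomp Require Import all_boot all_order all_algebra zify.
Import GRing.Theory.
Set Implicit Arguments.
Unset Strict Implicit.
Unset Printing Implicit Defensive.

(* A layered matching of [n] is encoded (Defs) by a composition c of n into
   parts 1 and 2, its blocks being the consecutive intervals of lengths c.
   Since every element of a block lies below the maximum of every later
   block, rb is the statistic rb_comp c = sum_i c_i * #(parts after c_i), the
   number of 2-blocks is the number of 2's of c, and the number of 1-blocks is
   n - 2k.  Splitting off the first part of c gives, for the refined sum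
   G n k (comps_gf) of q^rb over the matchings with k two-element blocks,
     G (n+2) k = q^(n+1-k) G (n+1) k + q^(2(n-k+1)) G n (k-1).
   The closed form T n k = q^(C(k,2)+C(n-k,2)) [n-k, k]_q (closed_form) obeys the
   same recurrence, by the q-Pascal identity [p+1,k+1] = [p,k+1] + q^(p-k) [p,k],
   and the same initial values at n = 0, 1; hence G = T (second claim).
   Grouping the terms of F_n by the number k of 2-blocks gives the first. *)

Section BlocksOfCompositions.

Fixpoint rb_comp (c : seq nat) : nat :=
  if c is p :: c' then p * size c' + rb_comp c' else 0.

Lemma size_blocks a c : size (blocks_of a c) = size c.
Proof. by elim: c a => //= p c IH a; rewrite IH. Qed.

Lemma count_size_blocks (P : pred nat) a c :
  count (fun B => P (size B)) (blocks_of a c) = count P c.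
Proof. by elim: c a => //= p c IH a; rewrite size_iota IH. Qed.

Lemma rb_cons B bs :
  (forall b j, b \in B -> j < size bs -> b < \max_(x <- nth [::] bs j) x) ->
  rb (B :: bs) = size B * size bs + rb bs.
Proof.
move=> below; rewrite /rb /= big_ord_recl /=; congr (_ + _).
  rewrite (eq_big_seq (fun _ => size bs)) => [|b bB].
    by rewrite big_const_seq count_predT iter_addn_0 mulnC.
  rewrite big_add1 /= big_mkord (eq_bigr (fun _ => 1)) => [|j _].
    by rewrite sum1_card card_ord.
  by rewrite below.
apply: eq_bigr => i _; apply: eq_bigr => b _.
by rewrite big_add1.
Qed.

Lemma blocks_max_ge a c j : all (fun p => 0 < p) c -> j < size c ->
  a <= \max_(x <- nth [::] (blocks_of a c) j) x.
Proof.
elim: c a j => [|p c IH] a [|j] //= /andP [p_gt0 c_pos] j_lt.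
  by apply: leq_bigmax_seq; rewrite // mem_iota leqnn /= -[X in X < _]addn0 ltn_add2l.
exact: leq_trans (leq_addr p a) (IH _ _ c_pos j_lt).
Qed.

Lemma rb_blocks a c : all (fun p => 0 < p) c -> rb (blocks_of a c) = rb_comp c.
Proof.
elim: c a => [|p c IH] a; first by rewrite /rb big_ord0.
move=> /= /andP [p_gt0 c_pos]; rewrite rb_cons ?size_iota ?size_blocks ?IH //.
move=> b j; rewrite mem_iota => /andP [_ b_lt] j_lt.
exact: leq_trans b_lt (blocks_max_ge (a + p) c_pos j_lt).
Qed.

End BlocksOfCompositions.

Section CompositionsInto1And2.

Definition ones (c : seq nat) : nat := count (fun p => p == 1) c.
Definition twos (c : seq nat) : nat := count (fun p => p == 2) c.

Lemma comps12_parts n c : c \in comps12 n ->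
  all (fun p => (p == 1) || (p == 2)) c /\ sumn c = n.
Proof.
elim/ltn_ind: n c => -[|[|n]] IH c /=; try by rewrite mem_seq1 => /eqP ->.
rewrite mem_cat => /orP [] /mapP [c' c'_in ->] /=.
  by have [-> ->] := IH n.+1 (ltnSn _) c' c'_in.
by have [-> ->] := IH n (ltnW (ltnSn _)) c' c'_in.
Qed.

Lemma comp12_counts c : all (fun p => (p == 1) || (p == 2)) c ->
  sumn c = ones c + 2 * twos c /\ size c = ones c + twos c.
Proof.
rewrite /ones /twos; elim: c => [|p c IH] //= /andP [p12 /IH [-> ->]].
by case/orP: p12 => /eqP -> /=; lia.
Qed.

Lemma nsingle_blocks a c : nsingle (blocks_of a c) = ones c.
Proof. exact: (count_size_blocks (fun p => p == 1)). Qed.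

Lemma ndouble_blocks a c : ndouble (blocks_of a c) = twos c.
Proof. exact: (count_size_blocks (fun p => p == 2)). Qed.

Lemma comps12_stats n c : c \in comps12 n ->
  [/\ ones c = n - 2 * twos c, size c = n - twos c, twos c <= n
    & all (fun p => 0 < p) c].
Proof.
move=> /comps12_parts [c12 sum_c]; have [sumE sizeE] := comp12_counts c12.
split; try lia.
by apply/allP => p /(allP c12) /orP [] /eqP ->.
Qed.

End CompositionsInto1And2.

Local Open Scope ring_scope.

Section QBinomial.

(* (q-1) times the q-integer [j]_q. *)
Definition qint (j : nat) : Rq := qv ^+ j - 1.
Definition qfalling (n k : nat) : Rq := \prod_(1 <= i < k.+1) qint (n.+1 - i).
Definition qfact (k : nat) : Rq := \prod_(1 <= i < k.+1) qint i.

(* q is transcendental, so q^j - 1 is invertible for j > 0. *)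
Lemma qint_neq0 j : (0 < j)%N -> qint j != 0.
Proof.
move=> j_gt0; rewrite /qint /qv -rmorphXn -(rmorph1 (@tofrac _)) -rmorphB.
by rewrite tofrac_eq0 -polyC1 -size_poly_eq0 size_XnsubC.
Qed.

Lemma qfactS k : qfact k.+1 = qfact k * qint k.+1.
Proof. by rewrite /qfact big_nat_recr. Qed.

Lemma qfallingSr n k : qfalling n k.+1 = qfalling n k * qint (n - k).
Proof. by rewrite /qfalling big_nat_recr. Qed.

Lemma qfallingS n k : qfalling n.+1 k.+1 = qint n.+1 * qfalling n k.
Proof. by rewrite /qfalling big_nat_recl // subSS subn0. Qed.

Lemma qfalling_gt n k : (n < k)%N -> qfalling n k = 0.
Proof.
elim: k => // k IH; rewrite ltnS leq_eqVlt qfallingSr => /orP [/eqP -> | /IH ->].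
  by rewrite subnn /qint expr0 subrr mulr0.
by rewrite mul0r.
Qed.

(* The product formula of Defs, written as a ratio (also valid for k > n). *)
Lemma qbinomE n k : qbinom n k = qfalling n k / qfact k.
Proof.
rewrite /qbinom; case: leqP => [k_le | /qfalling_gt ->]; last by rewrite mul0r.
rewrite /qfalling /qfact -prodfV -big_split; apply: eq_big_nat => i /andP [_ i_le].
by rewrite /qint addn1 subSn // (leq_trans _ k_le).
Qed.

Lemma qbinom0 n : qbinom n 0 = 1.
Proof. by rewrite /qbinom big_geq. Qed.

Lemma qbinom_gt n k : (n < k)%N -> qbinom n k = 0.
Proof. by rewrite /qbinom ltnNge => /negbTE ->. Qed.

Lemma qpascal p k : qbinom p.+1 k.+1 = qbinom p k.+1 + qv ^+ (p - k) * qbinom p k.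
Proof.
rewrite !qbinomE qfallingS qfallingSr qfactS.
have [p_lt | k_le] := ltnP p k; first by rewrite (qfalling_gt p_lt) !(mul0r, mulr0, addr0).
have qint_split : qint p.+1 = qint (p - k) + qv ^+ (p - k) * qint k.+1.
  by rewrite /qint mulrBr mulr1 -exprD addnS subnK // [RHS]addrC addrA subrK.
rewrite qint_split mulrDl mulrDl; congr (_ + _); first by congr (_ / _); exact: mulrC.
rewrite [qfact k * _]mulrC invfM !mulrA (mulrAC _ (qint k.+1)) mulfK //.
exact: qint_neq0.
Qed.

End QBinomial.

Section Recurrence.

Definition layered_rec (f : nat -> nat -> Rq) : Prop :=
  forall n k, f n.+2 k = qv ^+ (n.+1 - k) * f n.+1 k +
    (if k is k'.+1 then qv ^+ (2 * (n - k')) * f n k' else 0).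

Lemma layered_rec_unique f g : layered_rec f -> layered_rec g ->
  f 0%N =1 g 0%N -> f 1%N =1 g 1%N -> forall n, f n =1 g n.
Proof.
move=> rec_f rec_g eq0 eq1 n.
suff : f n =1 g n /\ f n.+1 =1 g n.+1 by case.
elim: n => [|n [IHn IHSn]]; split=> // -[|k]; rewrite rec_f rec_g IHSn //.
by rewrite IHn.
Qed.

Definition comps_gf (n k : nat) : Rq :=
  \sum_(c <- comps12 n | twos c == k) qv ^+ rb_comp c.

Definition closed_form (n k : nat) : Rq :=
  qv ^+ ('C(k, 2) + 'C(n - k, 2)) * qbinom (n - k) k.

Lemma comps_gf_prefix p m j :
  \sum_(c <- comps12 m | twos c == j) qv ^+ rb_comp (p :: c)
  = qv ^+ (p * (m - j)) * comps_gf m j.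
Proof.
rewrite /comps_gf big_distrr big_seq_cond [RHS]big_seq_cond.
apply: eq_bigr => c /andP [c_in /eqP <-].
by have [_ size_c _ _] := comps12_stats c_in; rewrite /= exprD size_c.
Qed.

Lemma comps_gf_rec : layered_rec comps_gf.
Proof.
move=> n k; rewrite [LHS]/comps_gf big_cat !big_map.
congr (_ + _); first by rewrite -[(n.+1 - k)%N]mul1n -(comps_gf_prefix 1).
case: k => [|k]; first by rewrite big_pred0.
exact: (comps_gf_prefix 2).
Qed.

Lemma binS2 m : 'C(m.+1, 2) = ('C(m, 2) + m)%N.
Proof. by rewrite binS bin1. Qed.

Lemma closed_form_rec : layered_rec closed_form.
Proof.
move=> n [|k].
  rewrite /closed_form !subn0 !qbinom0 !mulr1 addr0 -exprD !binS2; congr (_ ^+ _).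
  lia.
rewrite /closed_form !subSS; have [kk_le | n_lt] := leqP (k + k) n; last first.
  by rewrite !qbinom_gt ?mulr0 ?addr0 //; lia.
rewrite subSn ?qpascal; last by lia.
rewrite mulrDr !mulrA -!exprD !binS2.
by congr (_ ^+ _ * _ + _ ^+ _ * _); lia.
Qed.

Lemma comps_gfE n k : comps_gf n k = closed_form n k.
Proof.
apply: layered_rec_unique comps_gf_rec closed_form_rec _ _ n k => -[|j];
  by rewrite /comps_gf /closed_form big_cons big_nil /=
             ?qbinom0 ?qbinom_gt ?(mulr1, mulr0, addr0).
Qed.

End Recurrence.

Lemma layered_refined n k :
  \sum_(pi <- layered_matchings n | ndouble pi == k) qv ^+ rb pi = closed_form n k.
Proof.
rewrite -comps_gfE /comps_gf /layered_matchings big_map big_seq_cond [RHS]big_seq_cond.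
apply: eq_big => [c | c /andP [/comps12_stats [_ _ _ c_pos] _]].
  by rewrite ndouble_blocks.
by rewrite rb_blocks.
Qed.

Lemma Fn_by_doubles n :
  Fn n = \sum_(k < n.+1) xv ^+ (n - 2 * k) * yv ^+ k
           * qc (\sum_(pi <- layered_matchings n | ndouble pi == k) qv ^+ rb pi).
Proof.
pose term k pi := xv ^+ (n - 2 * k) * yv ^+ k * qc (qv ^+ rb pi).
transitivity (\sum_(pi <- layered_matchings n) \sum_(k < n.+1)
                 (if ndouble pi == k then term k pi else 0)).
  rewrite /Fn /layered_matchings !big_map big_seq [RHS]big_seq; apply: eq_bigr => c c_in.
  have [ones_c _ twos_le _] := comps12_stats c_in.
  rewrite -big_mkcond (eq_bigl (fun k : 'I_n.+1 => (k : nat) == ndouble (blocks_of 1 c)));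
    last by move=> k; rewrite eq_sym.
  rewrite (big_ord1_eq _ (fun k => term k (blocks_of 1 c))).
  by rewrite nsingle_blocks ndouble_blocks ltnS twos_le ones_c.
rewrite exchange_big; apply: eq_bigr => k _.
by rewrite -big_mkcond /= /qc !rmorph_sum -big_distrr.
Qed.

Theorem theorem4p6 :
  (forall n : nat,
     Fn n = \sum_(k < n.+1)
              xv ^+ (n - 2 * k) * yv ^+ k
              * qc (qv ^+ ('C(k, 2) + 'C(n - k, 2)) * qbinom (n - k) k))
  /\
  (forall n k : nat,
     \sum_(pi <- layered_matchings n | ndouble pi == k) qv ^+ rb pi
     = qv ^+ ('C(k, 2) + 'C(n - k, 2)) * qbinom (n - k) k).
Proof.
split=> [n | n k]; last exact: layered_refined.
rewrite Fn_by_doubles; apply: eq_bigr => k _.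
by rewrite layered_refined.
Qed.
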